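(* If $G$ is an appended star of order $n$, maximum degree $\Delta=3$ and diameter at least $8$, then $\gamma^{\rm ID}(G)\le \frac23 n=\left(\frac{\Delta-1}{\Delta}\right)n$.
   Context: An identifying code of a graph $G$ is a set $C\subseteq V(G)$ such that every vertex $v$ has $N[v]\cap C\neq\emptyset$ and for all distinct $u,v$, $N[u]\cap C \ne N[v]\cap C$, where $N[v]$ is the closed neighborhood; $\gamma^{\rm ID}(G)$ is its minimum size. A $k$-star is $K_{1,k}$. For a graph $G'$, a vertex $v$ of $G'$ and a star $S$, $G'\rhd_v S$ is the graph obtained from the disjoint union of $G'$ and $S$ by identifying $v$ with a leaf of $S$. An appended star is a graph $G_p$ obtained as follows: $G_0=S_0$ is a $\Delta_0$-star with $\Delta_0\ge3$, and for $i=1,\dots,p$, $G_i=G_{i-1}\rhd_{v_{i-1}}S_i$ where $S_i$ is a $\Delta_i$-star with $\Delta_i\ge 3$ and $v_{i-1}$ is a vertex of $G_{i-1}$. *)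

From mathcomp Require Import all_boot.
Set Implicit Arguments. Unset Strict Implicit. Unset Printing Implicit Defensive.

Section Graph.
Variables (T : finType) (adj : rel T).

Definition cnbh (v : T) : {set T} := [set u | (u == v) || adj v u].

Definition is_id_codeb (C : {set T}) : bool :=
  [forall v, cnbh v :&: C != set0] &&
  [forall u, forall v, (u != v) ==> (cnbh u :&: C != cnbh v :&: C)].

(* minimum size of an identifying code (default #|T| if none exists;
   since every code has size <= #|T| this default never makes a
   bound < #|T| hold vacuously) *)
Definition gammaID : nat :=
  \big[minn/#|T|]_(C : {set T} | is_id_codeb C) #|C|.

Definition deg (v : T) : nat := #|[set u | adj v u]|.
Definition max_degree : nat := \max_(v : T) deg v.

Fixpoint walk (k : nat) (u v : T) : bool :=
  match k with
  | 0 => u == v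
  | k'.+1 => [exists w, adj u w && walk k' w v]
  end.

(* distance: length of a shortest walk (shortest walks in a graph on
   #|T| vertices have length < #|T|); #|T| if v is unreachable from u *)
Definition dist (u v : T) : nat :=
  \big[minn/#|T|]_(k < #|T| | walk k u v) (k : nat).

Definition diameter : nat := \max_(u : T) \max_(v : T) dist u v.
End Graph.

(* Graphs are on vertex set {0,...,n-1} with adjacency a relation on nat. *)

Definition star_rel (k : nat) : rel nat :=
  fun x y => ((x == 0) && (1 <= y <= k)) || ((y == 0) && (1 <= x <= k)).

(* edges of a k-star glued to vertex v of a graph on {0..n-1}:
   centre n, leaves v (the identified leaf) and n+1, ..., n+k-1 *)
Definition attach_rel (n v k : nat) : rel nat :=
  fun x y =>
    let leaf z := (z == v) || (n < z < n + k) in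
    ((x == n) && leaf y) || ((y == n) && leaf x).

Inductive appended_star : nat -> rel nat -> Prop :=
| AppStar0 (k : nat) : 3 <= k -> appended_star k.+1 (star_rel k)
| AppStarS (n : nat) (e : rel nat) (v k : nat) :
    appended_star n e -> v < n -> 3 <= k ->
    appended_star (n + k) (fun x y => e x y || attach_rel n v k x y).

Definition ord_rel (n : nat) (e : rel nat) : rel 'I_n :=
  fun x y => e (nat_of_ord x) (nat_of_ord y).
Arguments ord_rel : clear implicits.

(* In an appended star of maximum degree 3 every star is a claw K_{1,3} and the
   leaf used for gluing is never a centre, so the graph is a tree with m centres,
   pairwise non-adjacent, and 2m + 1 non-centres, where n = 3m + 1.  The set of
   all non-centres is an identifying code of size 2m + 1, one too many.  A path of
   length 8 contains a spine c1 x1 c2 x2 c3 x3 c4 through four centres; pick further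
   leaves r1, w2, w3, r4 of c1, c2, c3, c4.  Trading the five non-centres
   x2, w2, w3, r1, r4 for the four centres c1 .. c4 gives a code of size 2m.  It is
   still identifying because, the graph being a tree, the five removed vertices
   have pairwise different sets of neighbours among c1 .. c4, and any other centre
   is adjacent to at most one of them, hence keeps two neighbours in the code. *)

From mathcomp Require Import all_boot order zify.
Set Implicit Arguments. Unset Strict Implicit. Unset Printing Implicit Defensive.

Lemma bigminn_le_cond (I : finType) (P : pred I) (F : I -> nat) x0 j :
  P j -> \big[minn/x0]_(i | P i) F i <= F j.
Proof. exact: (@Order.TotalTheory.bigmin_le_cond _ nat). Qed.

Lemma mem_bigmax_seq (s : seq nat) : s != [::] -> \max_(x <- s) x \in s.
Proof.
elim: s => // x [|y s] IHs _; first by rewrite big_seq1 mem_head.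
by rewrite big_cons inE; case: leqP => _; rewrite ?eqxx ?IHs ?orbT.
Qed.

Lemma uniq_map_inj (T1 T2 : eqType) (f : T1 -> T2) s :
  uniq (map f s) -> {in s &, injective f}.
Proof.
elim: s => //= x s IHs /andP[fx_s uniq_fs] y z.
rewrite !inE => /predU1P[-> | ys] /predU1P[-> | zs] //.
- by move=> fxz; move: fx_s; rewrite fxz map_f.
- by move=> fyx; move: fx_s; rewrite -fyx map_f.
- exact: IHs.
Qed.

Lemma count_mem_iota (t : seq nat) n :
  uniq t -> all (gtn n) t -> count (mem t) (iota 0 n) = size t.
Proof.
move=> uniq_t lt_t; rewrite -size_filter; apply/perm_size/uniq_perm => //.
  exact/filter_uniq/iota_uniq.
move=> z; rewrite mem_filter mem_iota add0n.
by apply/andP/idP => [[] // | zt]; split => //; exact: (allP lt_t).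
Qed.

Lemma card_ord_pred N (P : pred nat) : #|[set z : 'I_N | P (val z)]| = count P (iota 0 N).
Proof.
rewrite -sum1_card (eq_bigl (fun z : 'I_N => P (val z))) => [|z]; last by rewrite inE.
by rewrite -(big_mkord P (fun=> 1)) sum1_count /index_iota subn0.
Qed.

Section FiniteGraph.
Variables (T : finType) (adj : rel T).

Lemma path_walk x p : path adj x p -> walk adj (size p) x (last x p).
Proof.
elim: p x => [|y p IHp] x /=; first by rewrite eqxx.
by case/andP=> xy /IHp yp; apply/existsP; exists y; rewrite xy.
Qed.

Lemma dist_le_uniq_path x p :
  path adj x p -> uniq (x :: p) -> dist adj x (last x p) <= size p.
Proof.
move=> xp /card_uniqP card_xp.
have lt_pT : size p < #|T| by move: (max_card (mem (x :: p))); rewrite card_xp.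
exact: (@bigminn_le_cond _ _ (fun k : 'I_#|T| => val k) _ (Ordinal lt_pT) (path_walk xp)).
Qed.

Lemma gammaID_le_card C : is_id_codeb adj C -> gammaID adj <= #|C|.
Proof. exact: bigminn_le_cond. Qed.

Lemma diameter_uniq_path k :
  (forall x y, connect adj x y) -> k < diameter adj ->
  exists x p, [/\ path adj x p, uniq (x :: p) & k < size p].
Proof.
move=> conn lt_k.
have /existsP[u /existsP[v lt_uv]] : [exists u, exists v, k < dist adj u v].
  apply: contraLR lt_k; rewrite -leqNgt => /existsPn far.
  apply/bigmax_leqP => u _; apply/bigmax_leqP => v _.
  by have /existsPn/(_ v) := far u; rewrite -leqNgt.
have /connectP[p uvp vE] := conn u v; rewrite {}vE in lt_uv.
case: (shortenP uvp) lt_uv => q uq uniq_q _ lt_uq.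
by exists u, q; split => //; apply: leq_trans lt_uq (dist_le_uniq_path uq uniq_q).
Qed.
End FiniteGraph.

Definition code_nbh (e : rel nat) (C : pred nat) (u z : nat) : bool :=
  ((z == u) || e u z) && C z.

Lemma id_code_ord_rel N e (C : pred nat) :
  (forall u, u < N -> exists2 z, z < N & code_nbh e C u z) ->
  (forall u v, u < N -> v < N -> u != v ->
     exists2 z, z < N & code_nbh e C u z != code_nbh e C v z) ->
  is_id_codeb (ord_rel N e) [set z : 'I_N | C (val z)].
Proof.
move=> dom sep; apply/andP; split.
- apply/forallP => u; have [z lt_z uz] := dom _ (ltn_ord u).
  by apply/set0Pn; exists (Ordinal lt_z); rewrite !inE.
- apply/forallP => u; apply/forallP => v; apply/implyP => uv.
  have [z lt_z] := sep _ _ (ltn_ord u) (ltn_ord v) uv.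
  by apply: contraNneq => /setP/(_ (Ordinal lt_z)); rewrite !inE => /eqP.
Qed.

(** * Trees given by parent pointers *)

Record parent_tree (N : nat) (e : rel nat) (par : nat -> nat) : Prop := ParentTree {
  tree_bounded : forall x y, e x y -> (x < N) && (y < N);
  tree_adj : forall x y, x < N -> y < N ->
    e x y = ((0 < x) && (par x == y)) || ((0 < y) && (par y == x));
  tree_par_lt : forall x, 0 < x -> x < N -> par x < x }.

Section ParentTree.
Variables (N : nat) (e : rel nat) (par : nat -> nat).
Hypothesis pt : parent_tree N e par.

Lemma tree_sym : symmetric e.
Proof.
suff le_e x y : e x y -> e y x by move=> x y; apply/idP/idP; apply: le_e.
move=> exy; have /andP[ltx lty] := tree_bounded pt exy.
by rewrite (tree_adj pt) // orbC -(tree_adj pt).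
Qed.

Lemma tree_neq x y : e x y -> x != y.
Proof.
move=> exy; have /andP[_ lty] := tree_bounded pt exy.
apply: contraTneq exy => ->; rewrite (tree_adj pt) // orbb.
by case: (posnP y) => [-> //| /(tree_par_lt pt)/(_ lty)/ltn_eqF ->].
Qed.

Lemma tree_par_of_lt x y : e x y -> y < x -> par x = y.
Proof.
move=> exy lt_yx; have /andP[ltx lty] := tree_bounded pt exy.
move: exy; rewrite (tree_adj pt) // => /orP[/andP[_ /eqP //] | /andP[y0 /eqP pyx]].
by have := tree_par_lt pt y0 lty; rewrite pyx ltnNge ltnW.
Qed.

(* The largest vertex of a cycle would have two distinct smaller neighbours,
   both of them its parent. *)
Lemma tree_no_cycle p : 2 < size p -> cycle e p -> uniq p -> False.
Proof.
move=> p3 cyc_p uniq_p; have /mem_bigmax_seq Mp : p != [::] by case: p p3 {cyc_p uniq_p}.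
set M := \max_(x <- p) x in Mp; case: (rot_to Mp) => i q rotE.
have le_M x : x \in q -> x <= M.
  by move=> xq; rewrite leq_bigmax_seq // -(mem_rot i) rotE inE xq orbT.
move: p3 cyc_p uniq_p; rewrite -(size_rot i) -(rot_cycle i) -(rot_uniq i) rotE.
case: q {rotE} le_M => [|a [|c t]] //= le_M _.
rewrite rcons_path => /and4P[Ma _ _ bM] /and4P[nM na _ _].
have lt_M x : x \in [:: a, c & t] -> x < M.
  by move=> xq; rewrite ltn_neqAle le_M // andbT; apply: contraNneq nM => <-.
have ab : a != last c t by apply: contraNneq na => ->; exact: mem_last.
rewrite tree_sym in bM.
have lt_b : last c t < M by rewrite lt_M // inE mem_last orbT.
have := tree_par_of_lt bM lt_b.
by rewrite (tree_par_of_lt Ma (lt_M a (mem_head _ _))) => /eqP; rewrite (negbTE ab).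
Qed.

(* Shortening the walk to a simple path, the two edges at g would close a cycle. *)
Lemma tree_nbr_unique g y q :
  e g y -> path e y q -> e g (last y q) -> g \notin q -> y = last y q.
Proof.
move=> gy yq; case: (shortenP yq) => q' yq' uniq_q' sub_q' gl gq.
apply/eqP/negPn/negP => ne; apply: (@tree_no_cycle [:: g, y & q']).
- by case: q' {yq' uniq_q' sub_q' gl} ne => //=; rewrite eqxx.
- by rewrite /= gy rcons_path yq' tree_sym.
- rewrite cons_uniq uniq_q' andbT inE negb_or tree_neq //=.
  by apply: contra gq; apply: sub_q'.
Qed.

Lemma tree_square u v p q : e u p -> e u q -> e v p -> e v q -> u != v -> p = q.
Proof.
move=> up uq vp vq uv; apply: (tree_nbr_unique (q := [:: v; q]) up) => /=.
- by rewrite tree_sym vp vq.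
- exact: uq.
- by rewrite !inE negb_or uv tree_neq.
Qed.

Lemma tree_nonadj g y y0 q :
  e g y0 -> path e y q -> last y q = y0 -> g \notin q -> y != y0 -> e g y = false.
Proof.
move=> gy0 yq qy0 gq; subst y0; apply: contraNF => gy.
by apply/eqP; apply: tree_nbr_unique gy yq gy0 gq.
Qed.

Lemma tree_connected : 0 < N -> forall x y : 'I_N, connect (ord_rel N e) x y.
Proof.
move=> N0; set root := Ordinal N0.
have to_root x : connect (ord_rel N e) x root.
  have [n] := ubnP (val x); elim: n x => // n IHn x; rewrite ltnS => le_xn.
  case: (posnP (val x)) => [x0 | x_pos].
    by rewrite (_ : x = root) ?connect0 //; apply: val_inj.
  have lt_px := tree_par_lt pt x_pos (ltn_ord x).
  have px := ltn_trans lt_px (ltn_ord x).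
  apply: (connect_trans (y := Ordinal px)); last by apply: IHn; apply: leq_trans lt_px le_xn.
  by apply: connect1; rewrite /ord_rel /= (tree_adj pt) // x_pos eqxx.
move=> x y; apply: connect_trans (to_root x) _.
by rewrite (sym_connect_sym (fun x y : 'I_N => tree_sym x y)).
Qed.
End ParentTree.

(** * Appended stars of maximum degree 3 *)

Definition subcubic (e : rel nat) := forall x s, uniq s -> all (e x) s -> size s <= 3.

Lemma subcubic_of_max_degree n (e : rel nat) :
  (forall x y, e x y -> (x < n) && (y < n)) ->
  max_degree (ord_rel n e) <= 3 -> subcubic e.
Proof.
move=> bd maxdeg x [//|y s] uniq_s xs.
have lt_xn : x < n by have /andP[/bd/andP[] //] := xs.
apply: leq_trans maxdeg; rewrite /max_degree.
apply: leq_trans (leq_bigmax (F := deg (ord_rel n e)) (Ordinal lt_xn)); rewrite /deg.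
have lt_s : count (fun z => z < n) (y :: s) = size (y :: s).
  by apply/eqP; rewrite -all_count; apply: sub_all xs => z /bd/andP[].
rewrite -lt_s -(@size_pmap_sub _ _ 'I_n) -(card_uniqP (pmap_sub_uniq _ uniq_s)).
apply: subset_leq_card; apply/subsetP => z.
by rewrite mem_pmap_sub in_set => /(allP xs).
Qed.

(* An appended star of maximum degree 3; ctr marks the centres of its m claws. *)
Record claw_tree (N : nat) (e : rel nat) (par : nat -> nat) (ctr : pred nat) (m : nat) :
  Prop := ClawTree {
  ct_tree : parent_tree N e par;
  ct_bipartite : forall x y, e x y -> ctr x != ctr y;
  ct_claw : forall x, x < N -> ctr x ->
    exists a b c, [/\ e x a, e x b, e x c & uniq [:: a; b; c]];
  ct_centres : count ctr (iota 0 N) = m;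
  ct_order : N = 3 * m + 1 }.

Lemma appended_star_bounded N e :
  appended_star N e -> forall x y, e x y -> (x < N) && (y < N).
Proof.
elim=> [k _ | n e0 v k _ IHe lt_vn k3] x y; first by rewrite /star_rel; lia.
by case/orP=> [/IHe | ]; rewrite /attach_rel; lia.
Qed.

Lemma star_claw_tree k :
  3 <= k -> subcubic (star_rel k) -> claw_tree k.+1 (star_rel k) (fun=> 0) (pred1 0) 1.
Proof.
move=> k3 sub3; have {k3} -> : k = 3.
  apply/eqP; rewrite eqn_leq k3 andbT leqNgt; apply/negP => k4.
  suff : 4 <= 3 by [].
  by apply: (sub3 0 [:: 1; 2; 3; 4]) => //; rewrite /star_rel /=; lia.
split=> //.
- split=> // [x y | x y lt_x lt_y]; rewrite /star_rel; first by lia.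
  by case: x lt_x => [|[|[|[|[]]]]]; case: y lt_y => [|[|[|[|[]]]]].
- by move=> x y; rewrite /star_rel; case: x => [|[|[|[|[]]]]]; case: y => [|[|[|[|[]]]]].
- by move=> x _ /eqP ->; exists 1, 2, 3.
Qed.

Section Attach.
Variables (n : nat) (e : rel nat) (v k : nat).
Hypothesis lt_vn : v < n.
Local Notation e' := (fun x y => e x y || attach_rel n v k x y).

Definition attach_ctr (ctr : pred nat) x := if x < n then ctr x else x == n.

Definition attach_par (par : nat -> nat) x :=
  if x < n then par x else if x == n then v else n.

Lemma attach_parent_tree par :
  0 < k -> parent_tree n e par -> parent_tree (n + k) e' (attach_par par).
Proof.
move=> k0 pt; have bd := tree_bounded pt.
have no_par x y : x < n -> n <= y -> (0 < x) && (par x == y) = false.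
  move=> hx hy; case: (posnP x) => [-> // | x0].
  by rewrite ltn_eqF // (leq_trans (tree_par_lt pt x0 hx)) // ltnW // (leq_trans hx).
split.
- by move=> x y /orP[/bd | ]; rewrite /attach_rel; lia.
- move=> x y lt_x lt_y; rewrite /attach_rel /attach_par.
  case: (ltnP x n) => hx; case: (ltnP y n) => hy.
  + by rewrite (tree_adj pt) // (ltn_eqF hx) (ltn_eqF hy) !orbF.
  + have -> : e x y = false by apply/negbTE/negP => /bd; lia.
    by rewrite no_par // (ltn_eqF hx); case: (y =P n) => [-> | ?] /=; lia.
  + have -> : e x y = false by apply/negbTE/negP => /bd; lia.
    by rewrite no_par // (ltn_eqF hy); case: (x =P n) => [-> | ?] /=; lia.
  + have -> : e x y = false by apply/negbTE/negP => /bd; lia.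
    by case: (x =P n) => [-> | ?]; case: (y =P n) => [-> | ?] /=; lia.
- move=> x x0 lt_x; rewrite /attach_par; case: (ltnP x n) => hx.
    exact: (tree_par_lt pt).
  by case: (x =P n) => [-> | ]; lia.
Qed.

Lemma attach_centre_adj y : (y == v) || (n < y < n + k) -> e' n y.
Proof. by move=> leaf_y; rewrite /attach_rel eqxx leaf_y orbT. Qed.

Hypothesis sub3 : subcubic e'.

Lemma subcubic_attach_claw : 3 <= k -> k = 3.
Proof.
move=> k3; apply/eqP; rewrite eqn_leq k3 andbT leqNgt; apply/negP => k4.
suff : 4 <= 3 by [].
apply: (@sub3 n [:: v; n.+1; n.+2; n.+3]); first by rewrite /= !inE; lia.
by apply/allP => y; rewrite !inE => ?; apply: attach_centre_adj; lia.
Qed.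

Lemma subcubic_attach_leaf par ctr m : claw_tree n e par ctr m -> ctr v = false.
Proof.
move=> ct; apply/negbTE/negP => cv; have [a [b [c [va vb vc abc]]]] := ct_claw ct lt_vn cv.
have lt_n x : e v x -> x < n by case/(tree_bounded (ct_tree ct))/andP.
suff : 4 <= 3 by [].
apply: (@sub3 v [:: a; b; c; n]).
  by move: abc (lt_n _ va) (lt_n _ vb) (lt_n _ vc); rewrite /= !inE; lia.
by rewrite /= va vb vc /attach_rel !eqxx !orbT.
Qed.

Lemma attach_claw_tree par ctr m :
  claw_tree n e par ctr m -> 3 <= k ->
  claw_tree (n + k) e' (attach_par par) (attach_ctr ctr) m.+1.
Proof.
move=> ct /subcubic_attach_claw k_eq; have v_leaf := subcubic_attach_leaf ct.
have bd := tree_bounded (ct_tree ct).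
split.
- by apply: attach_parent_tree (ct_tree ct); rewrite k_eq.
- move=> x y /orP[exy | ]; rewrite /attach_ctr.
    by have /andP[-> ->] := bd _ _ exy; exact: (ct_bipartite ct).
  by rewrite /attach_rel => /orP[] /andP[/eqP -> /orP[/eqP -> | /andP[ny _]]];
    rewrite ?ltnn ?eqxx ?lt_vn ?v_leaf // ltnNge (ltnW ny) /= gtn_eqF.
- move=> x lt_x; rewrite /attach_ctr; case: (ltnP x n) => hx.
    move=> cx; have [a [b [c [xa xb xc abc]]]] := ct_claw ct hx cx.
    by exists a, b, c; rewrite xa xb xc.
  move=> /eqP ->; exists v, n.+1, n.+2.
  by split; rewrite ?attach_centre_adj ?eqxx //= ?inE; lia.
- rewrite k_eq iotaD count_cat (@eq_in_count _ _ ctr) ?(ct_centres ct); last first.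
    by move=> x; rewrite mem_iota /attach_ctr => /andP[_ ->].
  rewrite (@eq_in_count _ _ (pred1 n)); last first.
    by move=> x; rewrite mem_iota /attach_ctr add0n => /andP[/leq_gtF -> _].
  by rewrite add0n count_uniq_mem ?iota_uniq // mem_iota leqnn -addSnnS leq_addr addn1.
- by rewrite (ct_order ct) k_eq; lia.
Qed.
End Attach.

Lemma appended_star_claw_tree N e :
  appended_star N e -> subcubic e -> exists par ctr m, claw_tree N e par ctr m.
Proof.
elim=> [k k3 | n e0 v k _ IHe lt_vn k3] sub3.
  by exists (fun=> 0), (pred1 0), 1; exact: star_claw_tree.
have [par [ctr [m ct]]] : exists par ctr m, claw_tree n e0 par ctr m.
  apply: IHe => x s uniq_s es; apply: (sub3 x s uniq_s).
  by apply: sub_all es => y /= ->.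
by exists (attach_par n v par), (attach_ctr n ctr), m.+1; exact: attach_claw_tree.
Qed.

(** * An identifying code of size 2m *)

Section ClawTree.
Variables (N : nat) (e : rel nat) (par : nat -> nat) (ctr : pred nat) (m : nat).
Hypothesis ct : claw_tree N e par ctr m.
Local Notation pt := (ct_tree ct).

Lemma edge_lt_l x y : e x y -> x < N.
Proof. by case/(tree_bounded pt)/andP. Qed.

Lemma edge_lt_r x y : e x y -> y < N.
Proof. by case/(tree_bounded pt)/andP. Qed.

Lemma ctr_nbr_nonctr c x : ctr c -> e c x -> ~~ ctr x.
Proof. by move=> cc /(ct_bipartite ct); rewrite cc. Qed.

Lemma nonctr_nbr_ctr x c : ~~ ctr x -> e x c -> ctr c.
Proof. by move=> /negbTE nx /(ct_bipartite ct); rewrite nx; case: (ctr c). Qed.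

Lemma same_side_nonadj x y : ctr x = ctr y -> e x y = false.
Proof. by move=> xy; apply/negbTE/negP => /(ct_bipartite ct); rewrite xy eqxx. Qed.

Lemma ctr_neq a b : ctr a -> ~~ ctr b -> a != b.
Proof. by move=> ca; apply: contraNneq => <-. Qed.

Lemma third_neighbour g y z : g < N -> ctr g -> exists2 w, e g w & (w != y) && (w != z).
Proof.
move=> lt_g cg; have [a [b [c [ga gb gc]]]] := ct_claw ct lt_g cg.
rewrite /= !inE !negb_or => /and3P[/andP[ab ac] bc _].
have [ha | ha] := boolP ((a != y) && (a != z)); first by exists a.
have [hb | hb] := boolP ((b != y) && (b != z)); first by exists b.
by exists c => //; move: ha hb ab ac bc; lia.
Qed.

Section Spine.
Variables c1 c2 c3 c4 x1 x2 x3 r1 w2 w3 r4 : nat.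
Hypotheses (k1 : ctr c1) (k2 : ctr c2) (k3 : ctr c3) (k4 : ctr c4).
Hypotheses (c1x1 : e c1 x1) (c2x1 : e c2 x1) (c2x2 : e c2 x2) (c3x2 : e c3 x2)
  (c3x3 : e c3 x3) (c4x3 : e c4 x3).
Hypotheses (c1r1 : e c1 r1) (c2w2 : e c2 w2) (c3w3 : e c3 w3) (c4r4 : e c4 r4).
Hypotheses (c12 : c1 != c2) (c13 : c1 != c3) (c14 : c1 != c4) (c23 : c2 != c3)
  (c24 : c2 != c4) (c34 : c3 != c4) (x12 : x1 != x2) (x13 : x1 != x3) (x23 : x2 != x3).
Hypotheses (r1x1 : r1 != x1) (w2x1 : w2 != x1) (w2x2 : w2 != x2) (w3x2 : w3 != x2)
  (w3x3 : w3 != x3) (r4x3 : r4 != x3).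

Local Notation Z := [:: c1; c2; c3; c4].
Local Notation R := [:: x2; w2; w3; r1; r4].

Lemma nonctr_x1 : ~~ ctr x1. Proof. exact: ctr_nbr_nonctr c1x1. Qed.
Lemma nonctr_x2 : ~~ ctr x2. Proof. exact: ctr_nbr_nonctr c2x2. Qed.
Lemma nonctr_x3 : ~~ ctr x3. Proof. exact: ctr_nbr_nonctr c3x3. Qed.
Lemma nonctr_r1 : ~~ ctr r1. Proof. exact: ctr_nbr_nonctr c1r1. Qed.
Lemma nonctr_w2 : ~~ ctr w2. Proof. exact: ctr_nbr_nonctr c2w2. Qed.
Lemma nonctr_w3 : ~~ ctr w3. Proof. exact: ctr_nbr_nonctr c3w3. Qed.
Lemma nonctr_r4 : ~~ ctr r4. Proof. exact: ctr_nbr_nonctr c4r4. Qed.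
Local Hint Resolve nonctr_x1 nonctr_x2 nonctr_x3 nonctr_r1 : core.
Local Hint Resolve nonctr_w2 nonctr_w3 nonctr_r4 : core.

Local Ltac spine_fact := solve
  [ done | rewrite (tree_sym pt); done | rewrite eq_sym; done
  | apply: ctr_neq; done | rewrite eq_sym; apply: ctr_neq; done ].

Local Ltac spine_facts := rewrite /= ?inE ?negb_or; repeat (apply/andP; split); spine_fact.

(* [nonadj y0 q] refutes an edge g y: q walks from y to the neighbour y0 of g
   without meeting g. *)
Local Ltac nonadj y0 q :=
  apply: (tree_nonadj pt (y0 := y0) (q := q)); rewrite /=; spine_facts.

Local Notation trace y := [seq c <- Z | e c y].

Lemma skeleton_traces :
  map (fun y => trace y) [:: x1, x3 & R] =
  [:: [:: c1; c2]; [:: c3; c4]; [:: c2; c3]; [:: c2]; [:: c3]; [:: c1]; [:: c4]].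
Proof.
have c1x2 : e c1 x2 = false by nonadj x1 [:: c2; x1].
have c1x3 : e c1 x3 = false by nonadj x1 [:: c3; x2; c2; x1].
have c1w2 : e c1 w2 = false by nonadj x1 [:: c2; x1].
have c2x3 : e c2 x3 = false by nonadj x2 [:: c3; x2].
have c2w3 : e c2 w3 = false by nonadj x2 [:: c3; x2].
have c2r1 : e c2 r1 = false by nonadj x1 [:: c1; x1].
have c3x1 : e c3 x1 = false by nonadj x2 [:: c2; x2].
have c3w2 : e c3 w2 = false by nonadj x2 [:: c2; x2].
have c3r4 : e c3 r4 = false by nonadj x3 [:: c4; x3].
have c4x1 : e c4 x1 = false by nonadj x3 [:: c2; x2; c3; x3].
have c4x2 : e c4 x2 = false by nonadj x3 [:: c3; x3].
have c4w3 : e c4 w3 = false by nonadj x3 [:: c3; x3].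
have w3x1 : w3 != x1 by apply: contraTneq c3w3 => ->; rewrite c3x1.
have r4x1 : r4 != x1 by apply: contraTneq c4r4 => ->; rewrite c4x1.
have r4x2 : r4 != x2 by apply: contraTneq c4r4 => ->; rewrite c4x2.
have r1x2 : r1 != x2 by apply: contraTneq c1r1 => ->; rewrite c1x2.
have w2x3 : w2 != x3 by apply: contraTneq c2w2 => ->; rewrite c2x3.
have r1x3 : r1 != x3 by apply: contraTneq c1r1 => ->; rewrite c1x3.
have c1w3 : e c1 w3 = false by nonadj x1 [:: c3; x2; c2; x1].
have c1r4 : e c1 r4 = false by nonadj x1 [:: c4; x3; c3; x2; c2; x1].
have c2r4 : e c2 r4 = false by nonadj x2 [:: c4; x3; c3; x2].
have c3r1 : e c3 r1 = false by nonadj x2 [:: c1; x1; c2; x2].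
have c4w2 : e c4 w2 = false by nonadj x3 [:: c2; x2; c3; x3].
have c4r1 : e c4 r1 = false by nonadj x3 [:: c1; x1; c2; x2; c3; x3].
by rewrite /= c1x1 c1x2 c1x3 c1w2 c1w3 c1r1 c1r4 c2x1 c2x2 c2x3 c2w2 c2w3 c2r1 c2r4
  c3x1 c3x2 c3x3 c3w2 c3w3 c3r1 c3r4 c4x1 c4x2 c4x3 c4w2 c4w3 c4r1 c4r4.
Qed.

Lemma skeleton_traces_uniq : uniq (map (fun y => trace y) [:: x1, x3 & R]).
Proof.
rewrite skeleton_traces /= !inE !eqseq_cons !andbT /= !eqxx.
rewrite ?(eq_sym c2 c1) ?(eq_sym c3 c1) ?(eq_sym c4 c1).
rewrite ?(eq_sym c3 c2) ?(eq_sym c4 c2) ?(eq_sym c4 c3).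
by rewrite (negbTE c12) (negbTE c13) (negbTE c14) (negbTE c23) (negbTE c24) (negbTE c34).
Qed.

Lemma skeleton_uniq : uniq [:: x1, x3 & R].
Proof. exact: map_uniq skeleton_traces_uniq. Qed.

Lemma R_separated u v : u \in R -> v \in R -> u != v -> exists2 c, c \in Z & e c u != e c v.
Proof.
move=> uR vR /eqP uv.
have [/hasP[c cZ ne] | /hasPn same] := boolP (has (fun c => e c u != e c v) Z).
  by exists c.
have in_skeleton y : y \in R -> y \in [:: x1, x3 & R].
  by move=> yR; rewrite !inE in yR *; rewrite yR !orbT.
case: uv; apply: (uniq_map_inj skeleton_traces_uniq); rewrite ?in_skeleton //.
by apply: eq_in_filter => c /same; rewrite negbK => /eqP.
Qed.

Lemma R_walks_to_x2 g y : ctr g -> g \notin Z -> y \in R ->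
  exists q q', [/\ path e y q, last y q = x2, path e x2 q', last x2 q' = y & g \notin q ++ q'].
Proof.
move=> kg; rewrite !inE !negb_or => /and4P[g1 g2 g3 g4] /or4P[| | | /orP[]] /eqP ->.
- by exists [::], [::].
- by exists [:: c2; x2], [:: c2; w2]; split; spine_facts.
- by exists [:: c3; x2], [:: c3; w3]; split; spine_facts.
- by exists [:: c1; x1; c2; x2], [:: c2; x1; c1; r1]; split; spine_facts.
- by exists [:: c4; x3; c3; x2], [:: c3; x3; c4; r4]; split; spine_facts.
Qed.

Lemma outer_ctr_R_nbr_unique g y y' :
  ctr g -> g \notin Z -> y \in R -> y' \in R -> e g y -> e g y' -> y = y'.
Proof.
move=> kg gZ yR y'R gy gy'.
have [q [q0 [yq qx2 _ _ gq]]] := R_walks_to_x2 kg gZ yR.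
have [q0' [q' [_ _ x2q' q'y' gq']]] := R_walks_to_x2 kg gZ y'R.
have yq' : path e y (q ++ q') by rewrite cat_path yq qx2.
have := tree_nbr_unique pt gy yq'; rewrite last_cat qx2 q'y'; apply=> //.
by move: gq gq'; rewrite !mem_cat !negb_or => /andP[-> _] /andP[_ ->].
Qed.

Lemma outer_ctr_code_nbrs g : g < N -> ctr g -> g \notin Z ->
  exists p q, [/\ e g p, e g q, p != q, p \notin R & q \notin R].
Proof.
move=> lt_g kg gZ; have [a [b [c [ga gb gc]]]] := ct_claw ct lt_g kg.
rewrite /= !inE !negb_or => /and3P[/andP[ab ac] bc _].
have other y y' : y \in R -> e g y -> y != y' -> e g y' -> y' \notin R.
  move=> yR gy yy' gy'; apply: contra yy' => y'R.
  by apply/eqP; apply: (outer_ctr_R_nbr_unique kg gZ).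
case aR: (a \in R); first by exists b, c; rewrite (other a b) ?(other a c).
case bR: (b \in R); first by exists a, c; rewrite aR (other b c).
by exists a, b; rewrite aR bR.
Qed.

Lemma ctr_of_Z c : c \in Z -> ctr c.
Proof. by rewrite !inE => /or4P[] /eqP ->. Qed.

Lemma lt_of_Z c : c \in Z -> c < N.
Proof. by rewrite !inE => /or4P[] /eqP ->; apply: edge_lt_l; eassumption. Qed.

Lemma nonctr_of_R y : y \in R -> ~~ ctr y.
Proof. by rewrite !inE => /or4P[| | | /orP[]] /eqP ->. Qed.

Lemma x1_x3_notin_R : (x1 \notin R) && (x3 \notin R).
Proof. by have /and3P[] := skeleton_uniq; rewrite inE negb_or => /andP[_ ->]. Qed.

Definition spine_code : pred nat := [pred z | (~~ ctr z && (z \notin R)) || (z \in Z)].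
Local Notation S := (code_nbh e spine_code).

Lemma code_Z c : c \in Z -> spine_code c.
Proof. by move=> cZ; apply/orP; right. Qed.

Lemma code_nonctr y : ~~ ctr y -> y \notin R -> spine_code y.
Proof. by move=> ny yR; apply/orP; left; apply/andP. Qed.

Lemma code_sep_Z_pair c c' x v :
  c \in Z -> c' \in Z -> e c x -> e c' x -> c != c' -> x \notin R -> v != c ->
  exists2 z, z < N & S c z != S v z.
Proof.
move=> cZ c'Z cx c'x cc' xR vc.
have kc := ctr_of_Z cZ; have kc' := ctr_of_Z c'Z; have nx := ctr_nbr_nonctr kc cx.
rewrite /code_nbh; have [kv | nv] := boolP (ctr v).
  exists c; first exact: lt_of_Z.
  by rewrite eqxx code_Z // (eq_sym c v) (negbTE vc) (@same_side_nonadj v c) ?kc ?kv.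
have [-> | vx] := eqVneq v x.
  exists c'; first exact: lt_of_Z.
  rewrite (eq_sym c' c) (negbTE cc') (@same_side_nonadj c c') ?kc ?kc' //=.
  by rewrite (tree_sym pt) c'x orbT code_Z.
exists x; first exact: edge_lt_r cx.
rewrite cx orbT code_nonctr // (eq_sym x v) (negbTE vx) (@same_side_nonadj v x) //=.
by rewrite (negbTE nv) (negbTE nx).
Qed.

Lemma code_sep_Z u v : u \in Z -> v != u -> exists2 z, z < N & S u z != S v z.
Proof.
have [x1R x3R] := andP x1_x3_notin_R.
have [Z1 Z2 Z3 Z4] : [/\ c1 \in Z, c2 \in Z, c3 \in Z & c4 \in Z] by rewrite !inE !eqxx !orbT.
rewrite !inE => /or4P[] /eqP -> vu.
- exact: (code_sep_Z_pair Z1 Z2 c1x1 c2x1 c12 x1R vu).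
- by apply: (code_sep_Z_pair Z2 Z1 c2x1 c1x1 _ x1R vu); rewrite eq_sym.
- exact: (code_sep_Z_pair Z3 Z4 c3x3 c4x3 c34 x3R vu).
- by apply: (code_sep_Z_pair Z4 Z3 c4x3 c3x3 _ x3R vu); rewrite eq_sym.
Qed.

Lemma code_sep_outer_ctr u v : u < N -> ctr u -> u \notin Z -> v \notin Z -> u != v ->
  exists2 z, z < N & S u z != S v z.
Proof.
move=> lt_u ku uZ vZ uv.
have [p [q [up uq pq pR qR]]] := outer_ctr_code_nbrs lt_u ku uZ.
have Su y : e u y -> y \notin R -> S u y.
  by move=> uy yR; rewrite /code_nbh uy orbT code_nonctr // (ctr_nbr_nonctr ku uy).
have [Svp | ] := boolP (S v p); last by exists p; [exact: edge_lt_r up | rewrite Su].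
have [Svq | ] := boolP (S v q); last by exists q; [exact: edge_lt_r uq | rewrite Su].
exfalso; move: Svp Svq; rewrite /code_nbh => /andP[vp _] /andP[vq _].
have [kv | nv] := boolP (ctr v).
  have neq_v y : e u y -> (y == v) = false.
    by move/(ctr_nbr_nonctr ku)/(ctr_neq kv)/negbTE; rewrite eq_sym.
  rewrite !neq_v //= in vp vq.
  by move: pq; rewrite (tree_square pt up uq vp vq uv) eqxx.
have nonadj y : e u y -> e v y = false.
  by move=> uy; rewrite same_side_nonadj // (negbTE nv) (negbTE (ctr_nbr_nonctr ku uy)).
rewrite !nonadj // !orbF in vp vq.
by move: pq; rewrite (eqP vp) (eqP vq) eqxx.
Qed.

Lemma code_sep_nonctr u v : u < N -> v < N -> ~~ ctr u -> ~~ ctr v -> u != v ->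
  exists2 z, z < N & S u z != S v z.
Proof.
move=> lt_u lt_v nu nv uv.
have S_self y z : ~~ ctr y -> ~~ ctr z -> S y z = (z == y) && spine_code z.
  by move=> ny nz; rewrite /code_nbh same_side_nonadj ?orbF // (negbTE ny) (negbTE nz).
case uR: (u \in R).
  case vR: (v \in R).
    have [c cZ cuv] := R_separated uR vR uv.
    exists c; first exact: lt_of_Z.
    have S_R y : y \in R -> S y c = e c y.
      move=> yR; rewrite /code_nbh code_Z // andbT (tree_sym pt).
      by rewrite (negbTE (ctr_neq (ctr_of_Z cZ) (nonctr_of_R yR))).
    by rewrite !S_R.
  by exists v; rewrite // !S_self // eqxx (eq_sym v u) (negbTE uv) code_nonctr ?vR.
by exists u; rewrite // !S_self // eqxx (negbTE uv) code_nonctr ?uR.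
Qed.

Lemma code_separating u v : u < N -> v < N -> u != v -> exists2 z, z < N & S u z != S v z.
Proof.
have flip : (exists2 z, z < N & S v z != S u z) -> exists2 z, z < N & S u z != S v z.
  by case=> z lt_z; exists z; rewrite // eq_sym.
move=> lt_u lt_v uv.
case uZ: (u \in Z); first by apply: code_sep_Z; rewrite // eq_sym.
case vZ: (v \in Z); first exact/flip/code_sep_Z.
case ku: (ctr u); first by apply: code_sep_outer_ctr; rewrite ?uZ ?vZ.
case kv: (ctr v); first by apply/flip/code_sep_outer_ctr; rewrite ?uZ ?vZ // eq_sym.
by apply: code_sep_nonctr; rewrite ?ku ?kv.
Qed.

Lemma code_dominating u : u < N -> exists2 z, z < N & S u z.
Proof.
move=> lt_u; rewrite /code_nbh.
case uZ: (u \in Z); first by exists u; rewrite // eqxx code_Z.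
case ku: (ctr u).
  have [p [_ [up _ _ pR _]]] := outer_ctr_code_nbrs lt_u ku (negbT uZ).
  by exists p; [exact: edge_lt_r up | rewrite up orbT code_nonctr // (ctr_nbr_nonctr ku up)].
case uR: (u \in R); last by exists u; rewrite // eqxx code_nonctr ?ku ?uR.
have anchor : exists2 c, c \in Z & e c u.
  move: uR; rewrite !inE => /or4P[| | | /orP[]] /eqP ->.
  - by exists c2; rewrite ?inE ?eqxx ?orbT.
  - by exists c2; rewrite ?inE ?eqxx ?orbT.
  - by exists c3; rewrite ?inE ?eqxx ?orbT.
  - by exists c1; rewrite ?inE ?eqxx ?orbT.
  - by exists c4; rewrite ?inE ?eqxx ?orbT.
case: anchor => c cZ cu; exists c; first exact: lt_of_Z.
by rewrite (tree_sym pt) cu orbT code_Z.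
Qed.

Lemma spine_code_id : is_id_codeb (ord_rel N e) [set z : 'I_N | spine_code (val z)].
Proof. exact: id_code_ord_rel code_dominating code_separating. Qed.

Lemma spine_code_count : count spine_code (iota 0 N) = 2 * m.
Proof.
set A := [pred z | ~~ ctr z && (z \notin R)]; set s := iota 0 N.
have uniq_R : uniq R := subseq_uniq (suffix_subseq [:: x1; x3] R) skeleton_uniq.
have uniq_Z : uniq Z by rewrite /= !inE !negb_or c12 c13 c14 c23 c24 c34.
have cnt_Z : count (mem Z) s = 4.
  rewrite (count_mem_iota uniq_Z) //.
  by rewrite /= (edge_lt_l c1x1) (edge_lt_l c2x1) (edge_lt_l c3x2) (edge_lt_l c4x3).
have cnt_R : count (mem R) s = 5.
  rewrite (count_mem_iota uniq_R) //.
  rewrite /= (edge_lt_r c2x2) (edge_lt_r c2w2) (edge_lt_r c3w3).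
  by rewrite (edge_lt_r c1r1) (edge_lt_r c4r4).
have cnt_L : count (mem R) s + count A s = count (predC ctr) s.
  rewrite -[RHS]size_filter -(count_predC (mem R) (filter (predC ctr) s)) !count_filter.
  congr (_ + _); apply: eq_count => z /=; last by rewrite andbC.
  by case zR: (z \in R); rewrite //= (nonctr_of_R zR).
have cnt_AZ : count (predI A (mem Z)) s = 0.
  rewrite (@eq_count _ _ pred0) ?count_pred0 // => z /=.
  by case zZ: (z \in Z); rewrite ?andbF // (ctr_of_Z zZ).
have := count_predUI A (mem Z) s; rewrite cnt_AZ cnt_Z addn0.
change (count (predU A (mem Z)) s) with (count spine_code s) => ->.
have := count_predC ctr s; rewrite size_iota (ct_centres ct) (ct_order ct) -cnt_L cnt_R.
by move=> cnt; clear -cnt; lia.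
Qed.

Lemma spine_gammaID : 3 * gammaID (ord_rel N e) <= 2 * N.
Proof.
have := gammaID_le_card spine_code_id; rewrite card_ord_pred spine_code_count => le_g.
by have := ct_order ct; clear -le_g; lia.
Qed.

End Spine.

Lemma ctr_path_gammaID c p :
  ctr c -> path e c p -> uniq (c :: p) -> 5 < size p -> 3 * gammaID (ord_rel N e) <= 2 * N.
Proof.
case: p => [|x1 [|c2 [|x2 [|c3 [|x3 [|c4 p]]]]]] //= k1.
move=> /and5P[c1x1 x1c2 c2x2 x2c3 /and3P[c3x3 x3c4 _]] U _.
set s := [:: c, x1, c2, x2, c3, x3, c4 & p] in U.
have neq i j : i < j < 7 -> nth 0 s i != nth 0 s j.
  by case/andP=> ij j7; rewrite nth_uniq //=; clear -ij j7; lia.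
have k2 := nonctr_nbr_ctr (ctr_nbr_nonctr k1 c1x1) x1c2.
have k3 := nonctr_nbr_ctr (ctr_nbr_nonctr k2 c2x2) x2c3.
have k4 := nonctr_nbr_ctr (ctr_nbr_nonctr k3 c3x3) x3c4.
have [r1 c1r1 /andP[r1x1 _]] := third_neighbour x1 x1 (edge_lt_l c1x1) k1.
have [w2 c2w2 /andP[w2x1 w2x2]] := third_neighbour x1 x2 (edge_lt_l c2x2) k2.
have [w3 c3w3 /andP[w3x2 w3x3]] := third_neighbour x2 x3 (edge_lt_l c3x3) k3.
have [r4 c4r4 /andP[r4x3 _]] := third_neighbour x3 x3 (edge_lt_r x3c4) k4.
apply: (spine_gammaID k1 k2 k3 k4 c1x1 _ c2x2 _ c3x3 _ c1r1 c2w2 c3w3 c4r4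
  (neq 0 2 isT) (neq 0 4 isT) (neq 0 6 isT) (neq 2 4 isT) (neq 2 6 isT) (neq 4 6 isT)
  (neq 1 3 isT) (neq 1 5 isT) (neq 3 5 isT) r1x1 w2x1 w2x2 w3x2 w3x3 r4x3).
all: by rewrite (tree_sym pt).
Qed.

Lemma path_gammaID x p :
  path e x p -> uniq (x :: p) -> 6 < size p -> 3 * gammaID (ord_rel N e) <= 2 * N.
Proof.
case: (boolP (ctr x)) => [kx xp uniq_p /ltnW | nx].
  exact: (ctr_path_gammaID kx xp uniq_p).
case: p => [|c p] //= /andP[xc cp] /andP[_ uniq_p].
exact: ctr_path_gammaID (nonctr_nbr_ctr nx xc) cp uniq_p.
Qed.

End ClawTree.

Theorem mainTheorem16 (n : nat) (e : rel nat) :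
  appended_star n e ->
  max_degree (ord_rel n e) = 3 ->
  8 <= diameter (ord_rel n e) ->
  3 * gammaID (ord_rel n e) <= 2 * n.
Proof.
move=> star maxdeg diam.
have sub3 := subcubic_of_max_degree (appended_star_bounded star) (eq_leq maxdeg).
have [par [ctr [m ct]]] := appended_star_claw_tree star sub3.
have n_pos : 0 < n by rewrite (ct_order ct) addn1.
have [x [p [xp uniq_p lt7]]] := diameter_uniq_path (tree_connected (ct_tree ct) n_pos) diam.
apply: (path_gammaID ct (x := val x) (p := map val p)).
- by rewrite path_map.
- by rewrite -map_cons (map_inj_uniq val_inj).
- by rewrite size_map ltnW.
Qed.
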